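(* For $d\ge1$, let $A(d)$ be the sequence of the numbers $A(d,i,j)$, $0\le i\le d-1$, $1\le j\le d$, listed in increasing order of the pairs $(i,j)$ with respect to the total order $(i,j)<(i',j')$ iff $i<i'$, or $i=i'$ and $j>j'$. Then $A(d)$ is symmetric and unimodal; in particular its peak lies in the middle.
   Context: $S_d$ is the symmetric group on $[d]=\{1,\dots,d\}$. For $\sigma\in S_d$, $\mathrm{des}(\sigma)=\#\{i\in[d-1]:\sigma(i)>\sigma(i+1)\}$. For $0\le i\le d-1$ and $1\le j\le d$, $A(d,i,j)=\#\{\sigma\in S_d:\mathrm{des}(\sigma)=i,\ \sigma(1)=j\}$. A sequence $(s_0,\dots,s_N)$ is unimodal if $s_0\le\dots\le s_p\ge\dots\ge s_N$ for some $p$, and symmetric if $s_t=s_{N-t}$ for all $t$. *)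

From mathcomp Require Import all_boot all_fingroup.
Set Implicit Arguments. Unset Strict Implicit. Unset Printing Implicit Defensive.

(* A permutation sigma of [d] = {1..d} is represented by s : {perm 'I_d},
   with sigma(k) = (s (k-1)) + 1.  Its one-line notation (0-based values): *)
Definition oneline (d : nat) (s : {perm 'I_d}) : seq nat :=
  [seq val (s i) | i <- enum 'I_d].

Definition sigma_at (d : nat) (s : {perm 'I_d}) (k : nat) : nat :=
  (nth 0 (oneline s) k.-1).+1.

Definition des (d : nat) (s : {perm 'I_d}) : nat :=
  count (fun i => sigma_at s i.+1 < sigma_at s i) (iota 1 d.-1).

Definition A (d i j : nat) : nat :=
  #|[pred s : {perm 'I_d} | (des s == i) && (sigma_at s 1 == j)]|.

Definition Aseq (d : nat) : seq nat :=
  flatten [seq [seq A d i j | j <- rev (iota 1 d)] | i <- iota 0 d].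

Definition symmetric_seq (s : seq nat) : Prop :=
  forall t, t < size s -> nth 0 s t = nth 0 s (size s - 1 - t).

Definition unimodal_seq (s : seq nat) : Prop :=
  exists p, p < size s /\
    (forall t, t < p -> nth 0 s t <= nth 0 s t.+1) /\
    (forall t, p <= t -> t.+1 < size s -> nth 0 s t.+1 <= nth 0 s t).

From mathcomp Require Import all_boot all_fingroup.
From mathcomp Require Import zify.
Set Implicit Arguments. Unset Strict Implicit. Unset Printing Implicit Defensive.

(* Say that f : nat -> nat is unimodal about the centre c/2 when f t <= f u
   whenever u is at least as close to c/2 as t.

   Counting permutations by their first letter gives the recurrence
   A(d+1,i,j+1) = sum_{k<j} A(d,i-1,k+1) + sum_{j<=k<d} A(d,i,k+1).  In
   terms of the sequence A(d) this says that every entry of A(d+1) is a sum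
   of d consecutive entries of A(d) (padded with zeros): the entry at
   position i(d+1)+r is the window of length d ending at position i d + r. *)

Definition dist (a b : nat) : nat := (a - b) + (b - a).

Definition unimodal_about (f : nat -> nat) (c : nat) : Prop :=
  forall t u, dist (2 * u) c <= dist (2 * t) c -> f t <= f u.

Section UnimodalAbout.
Variables (f : nat -> nat) (c : nat).

Lemma unimodal_about_sym t : unimodal_about f c -> t <= c -> f (c - t) = f t.
Proof.
by move=> fU tc; apply/eqP; rewrite eqn_leq !fU // /dist; lia.
Qed.

Lemma unimodal_about_of_steps :
  (forall t, t <= c -> f (c - t) = f t) ->
  (forall t, 2 * t < c -> f t <= f t.+1) ->
  (forall t, c <= 2 * t -> f t.+1 <= f t) ->
  unimodal_about f c.
Proof.
move=> fsym up1 down1.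
have up a b : a <= b -> 2 * b <= c -> f a <= f b.
  elim: b => [|b IHb]; first by rewrite leqn0 => /eqP ->.
  rewrite leq_eqVlt ltnS => /orP [/eqP -> //| ab] bc.
  by apply: leq_trans (IHb ab _) (up1 _ _); lia.
have down a b : a <= b -> c <= 2 * a -> f b <= f a.
  elim: b => [|b IHb]; first by rewrite leqn0 => /eqP ->.
  rewrite leq_eqVlt ltnS => /orP [/eqP -> //| ab] ca.
  by apply: leq_trans (down1 _ _) (IHb ab ca); lia.
move=> t u; rewrite /dist => tu.
case: (leqP (2 * u) c) => uc.
- case: (leqP (2 * t) c) => tc; first by apply: up => //; lia.
  case: (leqP t c) => tc'; first by rewrite -(fsym t) // up //; lia.
  apply: leq_trans (down c t _ _) _; [lia | lia |].
  by rewrite -[in f c](subn0 c) fsym // up.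
- case: (leqP c (2 * t)) => tc; first by apply: down => //; lia.
  by rewrite -(fsym t); [apply: down |]; lia.
Qed.
End UnimodalAbout.

(* window m f s is the sum of f over the m positions just below s (fewer
   when s < m, which amounts to padding f with zeros on the left). *)
Definition window (m : nat) (f : nat -> nat) (s : nat) : nat :=
  \sum_(s - m <= q < s) f q.

Lemma window_succ m f s :
  window m f s.+1 + (if m <= s then f (s - m) else 0) = window m f s + f s.
Proof.
rewrite /window -big_nat_recr ?leq_subr //=; case: leqP => ms.
- by rewrite subSn // addnC -big_ltn // ltnS leq_subr.
- by rewrite addn0; have -> : s.+1 - m = s - m by lia.
Qed.

Section Window.
Variables (f : nat -> nat) (c m : nat).
Hypothesis f_unimodal : unimodal_about f c.
Hypothesis f_support : forall q, c < q -> f q = 0.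

Lemma window_supportE s :
  window m f s = \sum_(0 <= q < c.+1 | s - m <= q < s) f q.
Proof.
rewrite /window big_geq_mkord -big_mkord.
rewrite (big_nat_widen _ _ (s + c.+1)) ?leq_addr //.
rewrite [RHS](big_nat_widen _ _ (s + c.+1)) ?leq_addl //.
rewrite big_mkcond [RHS]big_mkcond; apply: eq_bigr => q _.
case: (ltnP c q) => cq; first by rewrite f_support // !if_same.
by rewrite ltnS cq andbT.
Qed.

(* Reflecting q to c - q on the support maps windows to windows. *)
Lemma window_sym s : s <= c + m + 1 -> window m f (c + m + 1 - s) = window m f s.
Proof.
move=> sC; rewrite !window_supportE big_nat_rev /= add0n.
apply: congr_big_nat => // q; first lia.
by case/and3P=> _ _ qc; rewrite subSS unimodal_about_sym.
Qed.

(* Window sums of f are unimodal about c + m + 1: the one-step comparisons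
   come from comparing f s with f (s - m). *)
Lemma unimodal_about_window : unimodal_about (window m f) (c + m + 1).
Proof.
apply: unimodal_about_of_steps => [t tC | t tC | t tC]; first exact: window_sym.
- rewrite -(leq_add2r (if m <= t then f (t - m) else 0)) window_succ leq_add2l.
  case: (leqP m t) => // mt; apply: f_unimodal; rewrite /dist; lia.
- rewrite -(leq_add2r (if m <= t then f (t - m) else 0)) window_succ leq_add2l.
  case: (leqP m t) => mt; last by rewrite f_support //; lia.
  apply: f_unimodal; rewrite /dist; lia.
Qed.
End Window.

Lemma unimodal_about_comp (F g : nat -> nat) (c C : nat) :
  {homo g : x y / x <= y} ->
  (forall p, p <= c -> g p + g (c - p) = C) ->
  unimodal_about F C -> unimodal_about (F \o g) c.
Proof.
move=> g_mono g_anti FU.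
apply: unimodal_about_of_steps => [t tc | t tc | t tc] /=.
- have gt_C : g t <= C by rewrite -(g_anti t tc) leq_addr.
  by rewrite -[g (c - t)](addKn (g t)) g_anti // unimodal_about_sym.
- apply: FU; have := g_anti t; have := g_mono t t.+1; have := g_mono t.+1 (c - t).
  rewrite /dist; lia.
- apply: FU; have := g_mono t t.+1.
  have C_le : C <= 2 * g t.
    case: (leqP t c) => [tc' | ct].
    + by have := g_anti t tc'; have := g_mono (c - t) t; lia.
    + have := g_anti c (leqnn c); have := g_mono c t; have := g_mono 0 t.
      rewrite subnn; lia.
  rewrite /dist; lia.
Qed.

Lemma sum_card_fibres (T : finType) (f : T -> nat) (a b : nat) :
  \sum_(a <= q < b) #|[pred x | f x == q]| = #|[pred x | a <= f x < b]|.
Proof.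
under eq_bigr => q _ do rewrite -sum1_card big_mkcond /=.
rewrite exchange_big -sum1_card [RHS]big_mkcond /=; apply: eq_bigr => x _.
by rewrite -big_mkcond (eq_bigl _ _ (fun q => eq_sym (f x) q)) big_nat1_eq.
Qed.

Definition descents (l : seq nat) : nat :=
  count (fun i => nth 0 l i < nth 0 l i.-1) (iota 1 (size l).-1).

Lemma size_oneline d (s : {perm 'I_d}) : size (oneline s) = d.
Proof. by rewrite size_map size_enum_ord. Qed.

Lemma des_descents d (s : {perm 'I_d}) : des s = descents (oneline s).
Proof.
by rewrite /des /descents size_oneline; apply: eq_count => i; rewrite /sigma_at ltnS.
Qed.

Lemma descents_cons2 x y l : descents [:: x, y & l] = (y < x) + descents (y :: l).
Proof.
rewrite /descents /= (iotaDl 1 1) count_map; congr (_ + _).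
by apply: eq_in_count => -[|i] //; rewrite mem_iota.
Qed.

Lemma descents_map (f : nat -> nat) l :
  {mono f : a b / a < b} -> descents (map f l) = descents l.
Proof.
move=> f_mono; rewrite /descents size_map; apply: eq_in_count => i.
rewrite mem_iota => /andP [i_pos i_lt].
by rewrite !(nth_map 0) ?f_mono //; lia.
Qed.

Lemma oneline_ord0 n (s : {perm 'I_n.+1}) :
  oneline s = val (s ord0) :: [seq val (s (lift ord0 i)) | i <- enum 'I_n].
Proof. by rewrite /oneline enum_ordSl /= -map_comp. Qed.

Lemma sigma_at1 n (s : {perm 'I_n.+1}) : sigma_at s 1 = (s ord0).+1.
Proof. by rewrite /sigma_at oneline_ord0. Qed.

Lemma oneline_lift n (j : 'I_n.+2) (s : {perm 'I_n.+1}) :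
  oneline (lift_perm ord0 j s) = val j :: map (bump j) (oneline s).
Proof.
rewrite oneline_ord0 lift_perm_id /oneline -map_comp; congr (_ :: _).
by apply: eq_map => i /=; rewrite lift_perm_lift.
Qed.

Lemma des_lift n (j : 'I_n.+2) (s : {perm 'I_n.+1}) :
  des (lift_perm ord0 j s) = (s ord0 < j) + des s.
Proof.
have bump_mono : {mono bump j : a b / a < b} by move=> a b; rewrite !ltnNge leq_bump2.
rewrite !des_descents oneline_lift [in map _ _]oneline_ord0 /= descents_cons2.
rewrite -map_cons -oneline_ord0 descents_map //; congr (_ + _).
by rewrite /bump; case: leqP; lia.
Qed.

Lemma lift_perm_onto n (j : 'I_n.+1) (σ : {perm 'I_n.+1}) :
  σ ord0 = j -> exists s : {perm 'I_n}, σ = lift_perm ord0 j s.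
Proof.
move=> σ0; pose t k := odflt k (unlift j (σ (lift ord0 k))).
have tK k : lift j (t k) = σ (lift ord0 k).
  have : j != σ (lift ord0 k) by rewrite -σ0 (inj_eq perm_inj) neq_lift.
  by rewrite /t; case/unlift_some => k' -> ->.
have t_inj : injective t.
  by move=> k1 k2 /(congr1 (lift j)); rewrite !tK => /perm_inj /lift_inj.
exists (perm t_inj); apply/permP => k.
case: (unliftP ord0 k) => [k'|] ->; last by rewrite lift_perm_id.
by rewrite lift_perm_lift permE tK.
Qed.

Lemma card_first_letter n (j : 'I_n.+1) (P : pred {perm 'I_n.+1}) :
  #|[pred σ : {perm 'I_n.+1} | (σ ord0 == j) && P σ]| =
  #|[pred s : {perm 'I_n} | P (lift_perm ord0 j s)]|.
Proof.
have lift_j_inj : injective (lift_perm ord0 j).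
  by move=> s1 s2 E; apply/permP => k; apply: (@lift_inj _ j); rewrite -!(lift_perm_lift ord0) E.
rewrite -(card_imset _ lift_j_inj); apply: eq_card => σ; rewrite !inE.
apply/andP/imsetP => [[/eqP /lift_perm_onto [s ->] Ps] | [s Ps ->]].
- by exists s.
- by rewrite lift_perm_id.
Qed.

Lemma nth_flatten_uniform (T : Type) (x0 : T) (ss : seq (seq T)) (m i r : nat) :
  all (fun s => size s == m) ss -> r < m ->
  nth x0 (flatten ss) (i * m + r) = nth x0 (nth [::] ss i) r.
Proof.
move=> ss_m r_m; elim: ss i ss_m => [|s ss IHss] i /=; first by rewrite !nth_nil.
case/andP => /eqP s_m ss_m; rewrite nth_cat s_m.
case: i => [|i]; first by rewrite mul0n add0n r_m.
rewrite ifF; last lia.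
have -> : i.+1 * m + r - m = i * m + r by lia.
exact: IHss.
Qed.

Lemma size_Aseq d : size (Aseq d) = d * d.
Proof. by rewrite /Aseq size_allpairs size_rev !size_iota. Qed.

Lemma des_lt n (s : {perm 'I_n.+1}) : des s < n.+1.
Proof. by rewrite /des ltnS (leq_trans (count_size _ _)) // size_iota. Qed.

(* The entry of A(d) at position i d + r is A(d, i, d - r); it vanishes for
   i >= d since a permutation of 'I_d has fewer than d descents. *)
Lemma nth_Aseq d i r : r < d -> nth 0 (Aseq d) (i * d + r) = A d i (d - r).
Proof.
move=> r_d; have rows_d : all (fun s => size s == d)
    [seq [seq A d i' j | j <- rev (iota 1 d)] | i' <- iota 0 d].
  by apply/allP => s /mapP [i' _ ->]; rewrite size_map size_rev size_iota.
rewrite /Aseq (nth_flatten_uniform 0 i rows_d r_d).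
case: (ltnP i d) => [i_d | d_i].
- rewrite (nth_map 0) ?size_iota // nth_iota // (nth_map 0) ?size_rev ?size_iota //.
  by rewrite nth_rev ?size_iota // nth_iota; [congr A; lia | lia].
- rewrite (nth_default [::]) ?size_map ?size_iota // nth_nil.
  case: d {rows_d} r_d d_i => // n _ d_i; apply/esym/eq_card0 => s; rewrite inE.
  by have := des_lt s; apply: contraTF => /andP [/eqP -> _]; rewrite -leqNgt.
Qed.

Lemma euclid_unique m a b x y :
  x < m -> y < m -> a * m + x = b * m + y -> a = b /\ x = y.
Proof.
move=> xm ym E; have m_pos : 0 < m by lia.
have := congr1 (divn^~ m) E; have := congr1 (modn^~ m) E.
by rewrite /= !modnMDl !divnMDl // !modn_small // !divn_small // !addn0.
Qed.

Definition Aindex d (s : {perm 'I_d}) : nat := des s * d + (d - sigma_at s 1).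

Lemma Aindex_eq n (s : {perm 'I_n.+1}) i r : r < n.+1 ->
  (Aindex s == i * n.+1 + r) = (des s == i) && (nat_of_ord (s ord0) == n - r).
Proof.
move=> r_lt; rewrite /Aindex sigma_at1.
have := ltn_ord (s ord0); move: (des s) (nat_of_ord (s ord0)) => D x x_lt.
apply/eqP/andP => [E | [/eqP -> /eqP ->]]; last by congr (_ + _); lia.
have y_lt : n.+1 - x.+1 < n.+1 by lia.
have [-> y_r] := euclid_unique y_lt r_lt E.
by split; apply/eqP; lia.
Qed.

Lemma nth_Aseq_fibre n q :
  nth 0 (Aseq n.+1) q = #|[pred s : {perm 'I_n.+1} | Aindex s == q]|.
Proof.
have r_lt := ltn_pmod q (ltn0Sn n).
rewrite {1}(divn_eq q n.+1) nth_Aseq // [in RHS](divn_eq q n.+1).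
apply: eq_card => s; rewrite !inE Aindex_eq // sigma_at1.
by rewrite subSn // eqSS.
Qed.

Lemma window_index m i r D y : y < m -> r <= m ->
  (i * m + r - m <= D * m + y < i * m + r) = (D + (r <= y) == i).
Proof.
move=> ym rm; apply/idP/eqP => [/andP [lo hi] | <-]; case: (leqP r y) => ry /=; nia.
Qed.

(* The recurrence: removing the first letter j = n + 1 - r of a permutation
   at position i (n+2) + r leaves a permutation whose position lies in the
   window of length n + 1 ending at i (n+1) + r. *)
Lemma Aindex_lift_window n i r : r < n.+2 ->
  #|[pred σ : {perm 'I_n.+2} | Aindex σ == i * n.+2 + r]| =
  #|[pred s : {perm 'I_n.+1} | i * n.+1 + r - n.+1 <= Aindex s < i * n.+1 + r]|.
Proof.
move=> r_lt; have j_lt : n.+1 - r < n.+2 by lia.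
set j := Ordinal j_lt.
rewrite (eq_card (B := [pred σ : {perm 'I_n.+2} | (σ ord0 == j) && (des σ == i)])).
- rewrite card_first_letter; apply: eq_card => s; rewrite !inE des_lift /Aindex sigma_at1.
  have x_lt := ltn_ord (s ord0); rewrite window_index; [|lia|lia].
  by rewrite addnC /=; congr (_ + _ == _); lia.
- by move=> σ; rewrite !inE Aindex_eq // -val_eqE andbC.
Qed.

(* reblock n maps position i (n+2) + r of A(n+2) to the end i (n+1) + r of
   the corresponding window in A(n+1). *)
Definition reblock (n p : nat) : nat := p %/ n.+2 * n.+1 + p %% n.+2.

Lemma nth_Aseq_window n p :
  nth 0 (Aseq n.+2) p = window n.+1 (nth 0 (Aseq n.+1)) (reblock n p).
Proof.
rewrite {1}(divn_eq p n.+2) nth_Aseq_fibre Aindex_lift_window ?ltn_pmod // /window.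
by under eq_bigr do rewrite nth_Aseq_fibre; rewrite sum_card_fibres.
Qed.

Lemma reblock_qr n i r : r < n.+2 -> reblock n (i * n.+2 + r) = i * n.+1 + r.
Proof. by move=> r_lt; rewrite /reblock divnMDl // divn_small // addn0 modnMDl modn_small. Qed.

Lemma reblock_mono n : {homo reblock n : p q / p <= q}.
Proof.
move=> p q pq; rewrite (divn_eq p n.+2) (divn_eq q n.+2) !reblock_qr ?ltn_pmod //.
have := leq_div2r n.+2 pq; have := ltn_pmod p (ltn0Sn n.+1).
move: pq; rewrite (divn_eq p n.+2) (divn_eq q n.+2).
move: (p %/ n.+2) (p %% n.+2) (q %/ n.+2) (q %% n.+2) => a x b y pq x_lt ab.
case: (ltnP a b) => a_b; nia.
Qed.

Lemma reblock_reflect n p : p <= n.+2 * n.+2 - 1 ->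
  reblock n p + reblock n (n.+2 * n.+2 - 1 - p) = n.+1 * n.+2.
Proof.
move=> p_le; have r_lt := ltn_pmod p (ltn0Sn n.+1).
have i_lt : p %/ n.+2 < n.+2 by rewrite ltn_divLR //; lia.
rewrite (divn_eq p n.+2) in p_le *.
move: (p %/ n.+2) (p %% n.+2) r_lt i_lt p_le => i r r_lt i_lt p_le.
have -> : n.+2 * n.+2 - 1 - (i * n.+2 + r) = (n.+1 - i) * n.+2 + (n.+1 - r) by nia.
rewrite !reblock_qr //; [nia | lia].
Qed.

Lemma Aseq_unimodal n : unimodal_about (nth 0 (Aseq n.+1)) (n.+1 * n.+1 - 1).
Proof.
elim: n => [|n IH].
  move=> [|t] u; rewrite /dist => ut; first by have -> : u = 0 by lia.
  by rewrite nth_default ?size_Aseq.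
have support q : n.+1 * n.+1 - 1 < q -> nth 0 (Aseq n.+1) q = 0.
  by move=> q_gt; rewrite nth_default // size_Aseq; lia.
have := unimodal_about_window (m := n.+1) IH support.
have -> : n.+1 * n.+1 - 1 + n.+1 + 1 = n.+1 * n.+2 by nia.
move=> windowU t u tu; rewrite !nth_Aseq_window.
exact: (unimodal_about_comp (reblock_mono n) (@reblock_reflect n) windowU).
Qed.

Lemma unimodal_about_seq (s : seq nat) :
  0 < size s -> unimodal_about (nth 0 s) (size s - 1) ->
  symmetric_seq s /\ unimodal_seq s.
Proof.
move=> s_pos sU; split=> [t t_lt | ].
  by rewrite (unimodal_about_sym (t := t) sU) //; lia.
exists ((size s - 1) %/ 2); split; first lia.
by split=> t *; apply: sU; rewrite /dist; lia.
Qed.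

Theorem corollary4p10 (d : nat) (hd : 1 <= d) :
  symmetric_seq (Aseq d) /\ unimodal_seq (Aseq d).
Proof.
case: d hd => // n _; apply: unimodal_about_seq; rewrite size_Aseq //.
exact: Aseq_unimodal.
Qed.
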